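(* Let $i=\lambda y.y$, and let $x$, $k$ be distinct variables. Then $\langle (\langle x\,i\rangle)\,(\mathcal{S}k.i)\rangle \simeq_{\mathrm{ctx}} \langle (\langle x\,i\rangle)\,((\langle x\,i\rangle)\,(\mathcal{S}k.i))\rangle$, but these two terms are not normal form bisimilar, i.e. $\langle (\langle x\,i\rangle)\,(\mathcal{S}k.i)\rangle \not\sim \langle (\langle x\,i\rangle)\,((\langle x\,i\rangle)\,(\mathcal{S}k.i))\rangle$.
   Context: The calculus $\lambda_{\mathcal S}$. Terms: $t ::= x \mid \lambda x.t \mid t\,t \mid \mathcal{S}k.t \mid \langle t\rangle$ ($\mathcal{S}$ is shift, $\langle\cdot\rangle$ is reset); values: $v ::= \lambda x.t \mid x$. Binders: $\lambda x.t$ binds $x$, $\mathcal{S}k.t$ binds $k$; terms up to $\alpha$-conversion; $\mathrm{fv}$, capture-avoiding substitution $t\{v/x\}$. Pure contexts $F ::= [\,] \mid v\,F \mid F\,t$; evaluation contexts $E ::= [\,] \mid v\,E \mid E\,t \mid \langle E\rangle$; general contexts $C ::= [\,] \mid \lambda x.C \mid t\,C \mid C\,t \mid \mathcal{S}k.C \mid \langle C\rangle$ (hole-filling may capture). Reduction: $E[(\lambda x.t)\,v] \to E[t\{v/x\}]$; $E[\langle F[\mathcal{S}k.t]\rangle] \to E[\langle t\{\lambda x.\langle F[x]\rangle/k\}\rangle]$ ($x\notin\mathrm{fv}(F)$); $E[\langle v\rangle]\to E[v]$. $t\Downarrow t'$ iff $t\to^*t'$ and $t'$ irreducible. Stuck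 term: not a value and irreducible; normal form: value or stuck; control stuck terms: $F[\mathcal{S}k.t]$; open stuck terms: $E[x\,v]$. Fresh: not free in the terms/contexts considered. Contextual equivalence $\simeq_{\mathrm{ctx}}$: $t_0\simeq_{\mathrm{ctx}}t_1$ iff for all contexts $C$ with $C[t_0],C[t_1]$ closed, $C[t_0]$ evaluates to a value iff... more precisely: $C[t_0]\Downarrow$ a value implies $C[t_1]\Downarrow$ a value, $C[t_0]\Downarrow$ a control stuck term implies $C[t_1]\Downarrow$ a control stuck term, and conversely. Normal form bisimilarity $\sim$. For $\mathcal R$ on terms, extend to evaluation contexts: $E_0\mathrel{\mathcal R}E_1$ iff either $E_0=E_0'[\langle F_0\rangle]$, $E_1=E_1'[\langle F_1\rangle]$ ($F_i$ pure) with $E_0'[x]\mathrel{\mathcal R}E_1'[x]$ and $\langle F_0[x]\rangle\mathrel{\mathcal R}\langle F_1[x]\rangle$ for fresh $x$, or $E_0=F_0$, $E_1=F_1$ pure with $F_0[x]\mathrel{\mathcal R}F_1[x]$ for fresh $x$. $v\mathbin{@}y$ is $x\,y$ if $v=x$ and $t\{y/x\}$ if $v=\lambda x.t$. $\mathcal R^{\mathrm{nf}}$ on normal forms: $v_0\mathrel{\mathcal R^{\mathrm{nf}}}v_1$ if $v_0\mathbin{@}x\mathrel{\mathcal R}v_1\mathbin{@}x$ ($x$ fresh); $F_0[\mathcal{S}k.t_0]\mathrel{\mathcal R^{\mathrm{nf}}}F_1[\mathcal{S}k.t_1]$ if $F_0\mathrel{\mathcal R}F_1$ and $\langle t_0\rangle\mathrel{\mathcal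 R}\langle t_1\rangle$; $E_0[x\,v_0]\mathrel{\mathcal R^{\mathrm{nf}}}E_1[x\,v_1]$ if $E_0\mathrel{\mathcal R}E_1$ and $v_0\mathrel{\mathcal R^{\mathrm{nf}}}v_1$. $\mathcal R$ is a normal form simulation if $t_0\mathrel{\mathcal R}t_1$, $t_0\Downarrow t_0'$ imply $t_1\Downarrow t_1'$ with $t_0'\mathrel{\mathcal R^{\mathrm{nf}}}t_1'$; a bisimulation if $\mathcal R$ and $\mathcal R^{-1}$ are simulations; $\sim$ is the largest normal form bisimulation. *)

(* The calculus lambda_S (shift/reset), locally nameless
   representation: bound variables are de Bruijn indices, free variables are
   named atoms.  Terms are thus identified up to alpha-conversion. *)
From Stdlib Require Import List Arith Relations.
Import ListNotations.

Definition atom := nat.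

(* raw locally-nameless terms; [lam t] binds bvar 0 in t (the lambda x),
   [shift t] binds bvar 0 in t (the continuation variable k of S k. t) *)
Inductive term : Type :=
| bvar  : nat -> term
| fvar  : atom -> term
| lam   : term -> term
| app   : term -> term -> term
| shift : term -> term
| reset : term -> term.

Fixpoint fv (t : term) : list atom :=
  match t with
  | bvar _ => []
  | fvar x => [x]
  | lam t | shift t | reset t => fv t
  | app t1 t2 => fv t1 ++ fv t2
  end.

Fixpoint lc_at (k : nat) (t : term) : Prop :=
  match t with
  | bvar i => i < k
  | fvar _ => True
  | lam t | shift t => lc_at (S k) t
  | reset t => lc_at k t
  | app t1 t2 => lc_at k t1 /\ lc_at k t2
  end.

Definition lc (t : term) : Prop := lc_at 0 t.

Definition closed (t : term) : Prop := lc t /\ fv t = [].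

Fixpoint open_rec (k : nat) (u : term) (t : term) : term :=
  match t with
  | bvar i => if Nat.eqb i k then u else bvar i
  | fvar x => fvar x
  | lam t => lam (open_rec (S k) u t)
  | shift t => shift (open_rec (S k) u t)
  | reset t => reset (open_rec k u t)
  | app t1 t2 => app (open_rec k u t1) (open_rec k u t2)
  end.
Definition open (t u : term) : term := open_rec 0 u t.

Fixpoint close_rec (k : nat) (x : atom) (t : term) : term :=
  match t with
  | bvar i => bvar i
  | fvar y => if Nat.eqb y x then bvar k else fvar y
  | lam t => lam (close_rec (S k) x t)
  | shift t => shift (close_rec (S k) x t)
  | reset t => reset (close_rec k x t)
  | app t1 t2 => app (close_rec k x t1) (close_rec k x t2)
  end.
Definition close (x : atom) (t : term) : term := close_rec 0 x t.

Definition nlam (x : atom) (t : term) : term := lam (close x t).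
Definition nshift (k : atom) (t : term) : term := shift (close k t).

Inductive val : Type :=
| VLam : term -> val
| VVar : atom -> val.

Definition val_term (v : val) : term :=
  match v with VLam b => lam b | VVar x => fvar x end.
Coercion val_term : val >-> term.

Definition is_value (t : term) : Prop := exists v : val, t = val_term v.

Inductive fctx : Type :=
| FHole : fctx
| FAppR : val -> fctx -> fctx
| FAppL : fctx -> term -> fctx.

Inductive ectx : Type :=
| EHole : ectx
| EAppR : val -> ectx -> ectx
| EAppL : ectx -> term -> ectx
| EReset : ectx -> ectx.

Fixpoint plugF (F : fctx) (t : term) : term :=
  match F with
  | FHole => t
  | FAppR v F => app (val_term v) (plugF F t)
  | FAppL F u => app (plugF F t) u
  end.

Fixpoint plugE (E : ectx) (t : term) : term :=
  match E with
  | EHole => t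
  | EAppR v E => app (val_term v) (plugE E t)
  | EAppL E u => app (plugE E t) u
  | EReset E => reset (plugE E t)
  end.

Fixpoint f2e (F : fctx) : ectx :=
  match F with
  | FHole => EHole
  | FAppR v F => EAppR v (f2e F)
  | FAppL F u => EAppL (f2e F) u
  end.

Fixpoint ecomp (E1 E2 : ectx) : ectx :=
  match E1 with
  | EHole => E2
  | EAppR v E => EAppR v (ecomp E E2)
  | EAppL E u => EAppL (ecomp E E2) u
  | EReset E => EReset (ecomp E E2)
  end.

Fixpoint fv_f (F : fctx) : list atom :=
  match F with
  | FHole => []
  | FAppR v F => fv (val_term v) ++ fv_f F
  | FAppL F u => fv_f F ++ fv u
  end.

Fixpoint fv_e (E : ectx) : list atom :=
  match E with
  | EHole => []
  | EAppR v E => fv (val_term v) ++ fv_e E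
  | EAppL E u => fv_e E ++ fv u
  | EReset E => fv_e E
  end.

(* reduction.  In the shift rule, lambda x.<F[x]> (x not in fv F) is the
   lambda whose body is <F[bvar 0]>. *)
Inductive step : term -> term -> Prop :=
| step_beta : forall (E : ectx) (b : term) (v : val),
    step (plugE E (app (lam b) v)) (plugE E (open b v))
| step_shift : forall (E : ectx) (F : fctx) (b : term),
    step (plugE E (reset (plugF F (shift b))))
         (plugE E (reset (open b (lam (reset (plugF F (bvar 0)))))))
| step_reset : forall (E : ectx) (v : val),
    step (plugE E (reset v)) (plugE E v).

Definition irreducible (t : term) : Prop := forall t', ~ step t t'.

Definition eval (t t' : term) : Prop :=
  clos_refl_trans term step t t' /\ irreducible t'.

Definition stuck (t : term) : Prop := ~ is_value t /\ irreducible t.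
Definition normal_form (t : term) : Prop := is_value t \/ stuck t.

Definition control_stuck (t : term) : Prop :=
  exists (F : fctx) (b : term), t = plugF F (shift b).
Definition open_stuck (t : term) : Prop :=
  exists (E : ectx) (x : atom) (v : val), t = plugE E (app (fvar x) v).

(* general contexts, with named binders; filling may capture *)
Inductive ctx : Type :=
| CHole : ctx
| CLam : atom -> ctx -> ctx
| CAppL : ctx -> term -> ctx
| CAppR : term -> ctx -> ctx
| CShift : atom -> ctx -> ctx
| CReset : ctx -> ctx.

Fixpoint fill (C : ctx) (t : term) : term :=
  match C with
  | CHole => t
  | CLam x C => nlam x (fill C t)
  | CAppL C u => app (fill C t) u
  | CAppR u C => app u (fill C t)
  | CShift k C => nshift k (fill C t)
  | CReset C => reset (fill C t)
  end.

Fixpoint ctx_wf (C : ctx) : Prop :=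
  match C with
  | CHole => True
  | CLam _ C | CShift _ C | CReset C => ctx_wf C
  | CAppL C u | CAppR u C => lc u /\ ctx_wf C
  end.

Definition evals_to_value (t : term) : Prop :=
  exists t', eval t t' /\ is_value t'.
Definition evals_to_control_stuck (t : term) : Prop :=
  exists t', eval t t' /\ control_stuck t'.

Definition ctx_equiv (t0 t1 : term) : Prop :=
  forall C : ctx, ctx_wf C -> closed (fill C t0) -> closed (fill C t1) ->
    (evals_to_value (fill C t0) <-> evals_to_value (fill C t1)) /\
    (evals_to_control_stuck (fill C t0) <-> evals_to_control_stuck (fill C t1)).

Definition val_at (v : val) (y : atom) : term :=
  match v with
  | VVar x => app (fvar x) (fvar y)
  | VLam b => open b (fvar y)
  end.

(* extension of R to evaluation contexts ("for fresh x" read as: for every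
   fresh x) *)
Definition ectx_rel (R : term -> term -> Prop) (E0 E1 : ectx) : Prop :=
  (exists (E0' E1' : ectx) (F0 F1 : fctx),
      E0 = ecomp E0' (EReset (f2e F0)) /\ E1 = ecomp E1' (EReset (f2e F1)) /\
      forall x : atom, ~ In x (fv_e E0) -> ~ In x (fv_e E1) ->
        R (plugE E0' (fvar x)) (plugE E1' (fvar x)) /\
        R (reset (plugF F0 (fvar x))) (reset (plugF F1 (fvar x))))
  \/
  (exists F0 F1 : fctx, E0 = f2e F0 /\ E1 = f2e F1 /\
      forall x : atom, ~ In x (fv_f F0) -> ~ In x (fv_f F1) ->
        R (plugF F0 (fvar x)) (plugF F1 (fvar x))).

Definition val_rel (R : term -> term -> Prop) (v0 v1 : val) : Prop :=
  forall x : atom, ~ In x (fv v0) -> ~ In x (fv v1) -> R (val_at v0 x) (val_at v1 x).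

Definition nf_rel (R : term -> term -> Prop) (t0 t1 : term) : Prop :=
  (exists v0 v1 : val, t0 = v0 /\ t1 = v1 /\ val_rel R v0 v1)
  \/
  (exists (F0 F1 : fctx) (b0 b1 : term),
      t0 = plugF F0 (shift b0) /\ t1 = plugF F1 (shift b1) /\
      ectx_rel R (f2e F0) (f2e F1) /\
      forall k : atom, ~ In k (fv b0) -> ~ In k (fv b1) ->
        R (reset (open b0 (fvar k))) (reset (open b1 (fvar k))))
  \/
  (exists (E0 E1 : ectx) (x : atom) (v0 v1 : val),
      t0 = plugE E0 (app (fvar x) v0) /\ t1 = plugE E1 (app (fvar x) v1) /\
      ectx_rel R E0 E1 /\ val_rel R v0 v1).

Definition nf_simulation (R : term -> term -> Prop) : Prop :=
  forall t0 t1 t0', R t0 t1 -> eval t0 t0' ->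
    exists t1', eval t1 t1' /\ nf_rel R t0' t1'.

Definition nf_bisimulation (R : term -> term -> Prop) : Prop :=
  nf_simulation R /\ nf_simulation (fun a b => R b a).

Definition nf_bisimilar (t0 t1 : term) : Prop :=
  exists R, nf_bisimulation R /\ R t0 t1.

(* Contextual equivalence is proved for every pair of terms related by [rel], the
   congruence generated by the pairs <<a i> (S k. i)> ~ <<a' i> (<a'' i> (S k. i))>
   with a ~ a' and a ~ a''.  Related terms reach related observable outcomes (values
   or control stuck terms), by strong induction on the length of the reduction.
   Away from such a pair, related terms reduce in lock-step.  At a pair, no control
   effect escapes the reset <a i>, so an observable outcome requires <a i> to reach a
   value; then S k. i captures and discards its continuation, leaving <i>.  On the
   other side, the shorter reduction of <a i> gives, by induction, values for both
   <a' i> and <a'' i>, after which the capture again leaves <i>.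

   Normal form bisimilarity fails because it compares the continuations of the open
   stuck subterm x i: for fresh z, <z (S k. i)> evaluates to i, whereas
   <z (<x i> (S k. i))> is stuck. *)

From Stdlib Require Import List Arith Relations Lia.

Local Notation steps := (clos_refl_trans term step).

Definition value (t : term) : Prop :=
  match t with lam _ | fvar _ => True | _ => False end.

Lemma value_val (v : val) : value v.
Proof. now destruct v. Qed.

Lemma value_is_val t : value t -> exists v : val, t = v.
Proof.
  destruct t; try contradiction; intros _.
  - now exists (VVar a).
  - now exists (VLam t).
Qed.

Lemma is_value_iff t : is_value t <-> value t.
Proof.
  split.
  - intros [v ->]; apply value_val.
  - apply value_is_val.
Qed.

Lemma val_term_inj (v w : val) : val_term v = val_term w -> v = w.
Proof. destruct v, w; simpl; congruence. Qed.

Inductive head_step : term -> term -> Prop :=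
| head_beta b v : value v -> head_step (app (lam b) v) (open b v)
| head_shift F b :
    head_step (reset (plugF F (shift b)))
              (reset (open b (lam (reset (plugF F (bvar 0))))))
| head_reset v : value v -> head_step (reset v) v.

Lemma step_iff t t1 :
  step t t1 <-> exists E r r1, t = plugE E r /\ t1 = plugE E r1 /\ head_step r r1.
Proof.
  split.
  - intros []; do 3 eexists; repeat split; constructor; apply value_val.
  - intros (E & r & r1 & -> & -> & Hr).
    destruct Hr as [b v Hv | F b | v Hv].
    + destruct (value_is_val _ Hv) as [w ->]; constructor.
    + constructor.
    + destruct (value_is_val _ Hv) as [w ->]; constructor.
Qed.

Lemma plugE_ecomp E1 E2 t : plugE (ecomp E1 E2) t = plugE E1 (plugE E2 t).
Proof. induction E1; simpl; congruence. Qed.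

Lemma step_plugE E t t1 : step t t1 -> step (plugE E t) (plugE E t1).
Proof.
  rewrite !step_iff; intros (E' & r & r1 & -> & -> & Hr).
  exists (ecomp E E'), r, r1; rewrite !plugE_ecomp; auto.
Qed.

Lemma steps_plugE E t t1 : steps t t1 -> steps (plugE E t) (plugE E t1).
Proof.
  induction 1; eauto using rt_step, rt_refl, rt_trans, step_plugE.
Qed.

Lemma plugE_value E s : value (plugE E s) -> E = EHole /\ value s.
Proof. destruct E; simpl; tauto. Qed.

Lemma plugF_shift_not_value F b : ~ value (plugF F (shift b)).
Proof. destruct F; simpl; tauto. Qed.

Lemma head_step_not_value r r1 : head_step r r1 -> ~ value r.
Proof. now destruct 1. Qed.

Lemma control_stuck_plugE F b E s :
  plugF F (shift b) = plugE E s -> value s \/ control_stuck s.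
Proof.
  revert E; induction F as [|v F IH|F IH u]; intros E Heq.
  - right; exists FHole, b; destruct E; simpl in *; congruence.
  - destruct E as [|w E|E u|E]; simpl in Heq; try discriminate.
    + right; now exists (FAppR v F), b.
    + injection Heq as _ Heq; eauto.
    + injection Heq as Heq _.
      left; apply (plugE_value E s); rewrite <- Heq; apply value_val.
  - destruct E as [|w E|E u'|E]; simpl in Heq; try discriminate.
    + right; now exists (FAppL F u), b.
    + injection Heq as Heq _.
      exfalso; apply (plugF_shift_not_value F b); rewrite Heq; apply value_val.
    + injection Heq as Heq _; eauto.
Qed.

Lemma head_step_not_control_stuck r r1 : head_step r r1 -> ~ control_stuck r.
Proof.
  intros Hr [F [b ->]].
  inversion Hr as [b' v Hv Heq | |]; subst;
    destruct F as [|w F|F u]; simpl in *; try discriminate.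
  - injection Heq as _ Heq; subst v; exact (plugF_shift_not_value F b Hv).
  - injection Heq as Heq _; apply (plugF_shift_not_value F b); now rewrite <- Heq.
Qed.

Lemma plugE_inj E s s' : plugE E s = plugE E s' -> s = s'.
Proof. induction E; simpl; intros H; try injection H; auto. Qed.

Lemma head_step_plugE E s r1 :
  head_step (plugE E s) r1 -> E = EHole \/ value s \/ control_stuck s.
Proof.
  destruct E as [|v E|E u|E]; simpl; intros Hr; [now left|..]; right;
    inversion Hr as [b w Hw Heq|F b Heq|w Hw Heq]; subst.
  - left; exact (proj2 (plugE_value E s Hw)).
  - left; apply (plugE_value E s); now rewrite <- Heq.
  - exact (control_stuck_plugE F b E s Heq).
  - left; exact (proj2 (plugE_value E s Hw)).
Qed.

Lemma redex_in_plugE E s E' r r1 :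
  plugE E s = plugE E' r -> head_step r r1 -> ~ value s -> ~ control_stuck s ->
  exists E2, E' = ecomp E E2.
Proof.
  intros Heq Hr Hs Hcs.
  assert (Hroot : forall E0, plugE E0 s = r -> E0 = EHole).
  { intros E0 <-; apply head_step_plugE in Hr as [|[|]]; tauto. }
  revert E' Heq; induction E as [|v E IH|E IH u|E IH]; intros E' Heq;
    [now exists E'|..]; destruct E' as [|v' E'|E' u'|E'];
    try (apply Hroot in Heq; discriminate); simpl in Heq; try discriminate.
  - injection Heq as Hv Heq; apply val_term_inj in Hv as ->.
    destruct (IH _ Heq) as [E2 ->]; now exists E2.
  - injection Heq as Hv _; exfalso; apply (head_step_not_value r r1 Hr), (plugE_value E').
    rewrite <- Hv; apply value_val.
  - injection Heq as Hv _; exfalso; apply Hs, (plugE_value E); rewrite Hv; apply value_val.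
  - injection Heq as Heq ->; destruct (IH _ Heq) as [E2 ->]; now exists E2.
  - injection Heq as Heq; destruct (IH _ Heq) as [E2 ->]; now exists E2.
Qed.

Lemma reset_not_control_stuck u : ~ control_stuck (reset u).
Proof. intros [[] [b H]]; discriminate. Qed.

Lemma step_plugE_reset E u t1 :
  step (plugE E (reset u)) t1 -> exists u1, step (reset u) u1 /\ t1 = plugE E u1.
Proof.
  rewrite step_iff; intros (E' & r & r1 & Heq & -> & Hr).
  destruct (redex_in_plugE _ _ _ _ _ Heq Hr (fun H => H) (reset_not_control_stuck u))
    as [E2 ->].
  rewrite plugE_ecomp in Heq; apply plugE_inj in Heq.
  exists (plugE E2 r1); rewrite plugE_ecomp; split; [|reflexivity].
  apply step_iff; exists E2, r, r1; auto.
Qed.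

Lemma step_reset_cases u u1 : step (reset u) u1 -> value u1 \/ exists u2, u1 = reset u2.
Proof.
  rewrite step_iff; intros (E & r & r1 & Heq & -> & Hr).
  destruct E; simpl in Heq; try discriminate.
  - subst r; inversion Hr; subst; simpl; eauto.
  - right; eexists; reflexivity.
Qed.

Lemma plugF_shift_inj F b F' b' :
  plugF F (shift b) = plugF F' (shift b') -> F = F' /\ b = b'.
Proof.
  revert F'; induction F as [|v F IH|F IH u]; intros [|v' F'|F' u'] Heq;
    simpl in Heq; try discriminate.
  - now injection Heq as ->.
  - injection Heq as Hv Heq; apply val_term_inj in Hv as ->.
    now destruct (IH _ Heq) as [-> ->].
  - injection Heq as Hv _; exfalso; apply (plugF_shift_not_value F' b').
    rewrite <- Hv; apply value_val.
  - injection Heq as Hv _; exfalso; apply (plugF_shift_not_value F b).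
    rewrite Hv; apply value_val.
  - injection Heq as Heq ->; now destruct (IH _ Heq) as [-> ->].
Qed.

Lemma step_reset_control_stuck F b u1 :
  step (reset (plugF F (shift b))) u1 ->
  u1 = reset (open b (lam (reset (plugF F (bvar 0))))).
Proof.
  rewrite step_iff; intros (E & r & r1 & Heq & -> & Hr).
  destruct E as [| | |E]; simpl in Heq; try discriminate.
  - subst r; inversion Hr as [| F' b' Heq | v Hv Heq]; subst.
    + now destruct (plugF_shift_inj _ _ _ _ Heq) as [-> ->].
    + now apply plugF_shift_not_value in Hv.
  - injection Heq as Heq; apply control_stuck_plugE in Heq as [Hv|Hcs].
    + now apply head_step_not_value in Hr.
    + now apply head_step_not_control_stuck in Hr.
Qed.

Lemma value_irreducible t : value t -> irreducible t.
Proof.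
  intros Hv t1; rewrite step_iff; intros (E & r & r1 & -> & _ & Hr).
  apply plugE_value in Hv as [_ Hv]; exact (head_step_not_value r r1 Hr Hv).
Qed.

Lemma control_stuck_irreducible t : control_stuck t -> irreducible t.
Proof.
  intros [F [b ->]] t1; rewrite step_iff; intros (E & r & r1 & Heq & _ & Hr).
  apply control_stuck_plugE in Heq as [Hv|Hcs].
  - exact (head_step_not_value r r1 Hr Hv).
  - exact (head_step_not_control_stuck r r1 Hr Hcs).
Qed.

Lemma app_fvar_not_control_stuck x (v : val) : ~ control_stuck (app (fvar x) v).
Proof.
  intros [[|w F|F u] [b H]]; simpl in H; try discriminate; injection H as H1 H2.
  - apply (plugF_shift_not_value F b); rewrite <- H2; apply value_val.
  - destruct F; discriminate H1.
Qed.

Lemma irreducible_steps t u : irreducible t -> steps t u -> u = t.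
Proof.
  intros Ht Hs; apply clos_rt_rt1n in Hs as [|t1 ? Hs _]; [reflexivity|].
  now apply Ht in Hs.
Qed.

Lemma open_stuck_irreducible t : open_stuck t -> irreducible t.
Proof.
  intros (E & x & v & ->) t1; rewrite step_iff; intros (E' & r & r1 & Heq & _ & Hr).
  destruct (redex_in_plugE _ _ _ _ _ Heq Hr) as [E2 ->].
  - now intros [].
  - apply app_fvar_not_control_stuck.
  - rewrite plugE_ecomp in Heq; apply plugE_inj in Heq.
    destruct E2 as [|w E2|E2 u|E2]; simpl in Heq; try discriminate.
    + subst r; inversion Hr.
    + injection Heq as _ Hv; apply (head_step_not_value r r1 Hr), (plugE_value E2).
      rewrite <- Hv; apply value_val.
    + injection Heq as Hx _; apply (head_step_not_value r r1 Hr), (plugE_value E2).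
      now rewrite <- Hx.
Qed.

Definition observable (t : term) : Prop := is_value t \/ control_stuck t.

Lemma observable_irreducible t : observable t -> irreducible t.
Proof.
  intros [Hv|Hcs].
  - apply value_irreducible, is_value_iff, Hv.
  - now apply control_stuck_irreducible.
Qed.

Lemma plugE_reset_not_observable E u : ~ observable (plugE E (reset u)).
Proof.
  intros [Hv|[F [b Hcs]]].
  - now apply is_value_iff, plugE_value in Hv as [-> []].
  - symmetry in Hcs; apply control_stuck_plugE in Hcs as [[]|Hcs].
    exact (reset_not_control_stuck u Hcs).
Qed.

Inductive nsteps : nat -> term -> term -> Prop :=
| nsteps_refl t : nsteps 0 t t
| nsteps_step n t t1 t2 : step t t1 -> nsteps n t1 t2 -> nsteps (S n) t t2.

Lemma steps_nsteps t t1 : steps t t1 -> exists n, nsteps n t t1.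
Proof.
  intros H; apply clos_rt_rt1n in H; induction H as [|t t1 t2 Hs _ [n Hn]].
  - exists 0; constructor.
  - exists (S n); econstructor; eauto.
Qed.

Lemma nsteps_plugE_reset n E u r :
  nsteps n (plugE E (reset u)) r -> observable r ->
  exists m1 m2 w, n = m1 + m2 /\ nsteps m1 (reset u) w /\ value w /\
                  nsteps m2 (plugE E w) r.
Proof.
  revert u; induction n as [|n IH]; intros u Hn Hr;
    inversion Hn as [|? ? t1 ? Hs Hrest]; subst.
  - now apply plugE_reset_not_observable in Hr.
  - apply step_plugE_reset in Hs as (u1 & Hs & ->).
    destruct (step_reset_cases _ _ Hs) as [Hv|[u2 ->]].
    + exists 1, n, u1; repeat econstructor; eauto.
    + destruct (IH u2 Hrest Hr) as (m1 & m2 & w & -> & H1 & Hw & H2).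
      exists (S m1), m2, w; repeat econstructor; eauto.
Qed.

Lemma nsteps_plugE_capture n E F b r :
  nsteps n (plugE E (reset (plugF F (shift b)))) r -> observable r ->
  exists m, n = S m /\
            nsteps m (plugE E (reset (open b (lam (reset (plugF F (bvar 0))))))) r.
Proof.
  intros Hn Hr; inversion Hn as [|m ? t1 ? Hs Hrest]; subst.
  - now apply plugE_reset_not_observable in Hr.
  - apply step_plugE_reset in Hs as (u1 & Hs & ->).
    apply step_reset_control_stuck in Hs as ->; eauto.
Qed.

Definition id_lam : term := lam (bvar 0).
Definition wrap (a : term) : term := reset (app a id_lam).
Definition once (a : term) : term := reset (app (wrap a) (shift id_lam)).
Definition twice (a' a'' : term) : term :=
  reset (app (wrap a') (app (wrap a'') (shift id_lam))).

Inductive rel : term -> term -> Prop :=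
| rel_bvar n : rel (bvar n) (bvar n)
| rel_fvar x : rel (fvar x) (fvar x)
| rel_lam t t' : rel t t' -> rel (lam t) (lam t')
| rel_app t1 t1' t2 t2' : rel t1 t1' -> rel t2 t2' -> rel (app t1 t2) (app t1' t2')
| rel_shift t t' : rel t t' -> rel (shift t) (shift t')
| rel_reset t t' : rel t t' -> rel (reset t) (reset t')
| rel_once_twice a a' a'' : rel a a' -> rel a a'' -> rel (once a) (twice a' a'').

#[local] Hint Constructors rel : core.

Lemma rel_refl t : rel t t.
Proof. induction t; auto. Qed.

Lemma rel_open_rec t t' u u' n :
  rel t t' -> rel u u' -> rel (open_rec n u t) (open_rec n u' t').
Proof.
  intros Ht Hu; revert n; induction Ht as [| | | | | |a a' a'' _ IH1 _ IH2]; intros k;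
    simpl; auto.
  - now destruct (n =? k).
  - exact (rel_once_twice _ _ _ (IH1 k) (IH2 k)).
Qed.

Lemma rel_close_rec t t' n x : rel t t' -> rel (close_rec n x t) (close_rec n x t').
Proof.
  intros Ht; revert n; induction Ht as [| | | | | |a a' a'' _ IH1 _ IH2]; intros k;
    simpl; auto.
  - destruct (_ =? _); auto.
  - exact (rel_once_twice _ _ _ (IH1 k) (IH2 k)).
Qed.

Lemma rel_fill C t t' : rel t t' -> rel (fill C t) (fill C t').
Proof.
  induction C; simpl; intros Ht; unfold nlam, nshift, close;
    auto using rel_close_rec, rel_refl.
Qed.

Lemma rel_value t t' : rel t t' -> value t <-> value t'.
Proof. now destruct 1. Qed.

Lemma rel_control_stuck F b t' :
  rel (plugF F (shift b)) t' ->
  exists F' b', t' = plugF F' (shift b') /\ rel b b' /\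
                forall z z', rel z z' -> rel (plugF F z) (plugF F' z').
Proof.
  revert t'; induction F as [|v F IH|F IH u]; simpl; intros t' Ht;
    inversion Ht as [| | | t1 t1' t2 t2' H1 H2 | t t'' Hb | |]; subst.
  - now exists FHole, t''.
  - destruct (IH _ H2) as (F' & b' & -> & Hb & HF).
    destruct (value_is_val t1') as [v' ->]; [apply (rel_value _ _ H1), value_val|].
    exists (FAppR v' F'), b'; simpl; auto.
  - destruct (IH _ H1) as (F' & b' & -> & Hb & HF).
    exists (FAppL F' t2'), b'; simpl; auto.
Qed.

Lemma rel_control_stuck_inv F b t :
  rel t (plugF F (shift b)) ->
  exists F0 b0, t = plugF F0 (shift b0) /\ rel b0 b /\
                forall z z', rel z z' -> rel (plugF F0 z) (plugF F z').
Proof.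
  revert t; induction F as [|v F IH|F IH u]; simpl; intros t Ht;
    inversion Ht as [| | | t1 t1' t2 t2' H1 H2 | t0 t'' Hb | |]; subst.
  - now exists FHole, t0.
  - destruct (IH _ H2) as (F0 & b0 & -> & Hb & HF).
    destruct (value_is_val t1) as [v0 ->]; [apply (rel_value _ _ H1), value_val|].
    exists (FAppR v0 F0), b0; simpl; auto.
  - destruct (IH _ H1) as (F0 & b0 & -> & Hb & HF).
    exists (FAppL F0 t2), b0; simpl; auto.
Qed.

Lemma rel_observable r r' :
  rel r r' -> (is_value r <-> is_value r') /\ (control_stuck r <-> control_stuck r').
Proof.
  intros Hr; rewrite !is_value_iff; split; [now apply rel_value|split].
  - intros (F & b & ->); destruct (rel_control_stuck _ _ _ Hr) as (F' & b' & -> & _).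
    now exists F', b'.
  - intros (F & b & ->); destruct (rel_control_stuck_inv _ _ _ Hr) as (F0 & b0 & -> & _).
    now exists F0, b0.
Qed.

Definition rel_ectx (E E' : ectx) : Prop :=
  forall z z', rel z z' -> rel (plugE E z) (plugE E' z').

Definition rel_at_twice (t t' : term) : Prop :=
  exists E E' a a' a'', t = plugE E (once a) /\ t' = plugE E' (twice a' a'') /\
    rel a a' /\ rel a a'' /\ rel_ectx E E'.

Lemma rel_at_twice_plugE E E' t t' :
  rel_ectx E E' -> rel_at_twice t t' -> rel_at_twice (plugE E t) (plugE E' t').
Proof.
  intros HE (E0 & E0' & a & a' & a'' & -> & -> & Ha' & Ha'' & HE0).
  exists (ecomp E E0), (ecomp E' E0'), a, a', a''; rewrite !plugE_ecomp.
  repeat split; auto; intros z z' Hz; rewrite !plugE_ecomp; auto.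
Qed.

Lemma rel_at_twice_root a a' a'' :
  rel a a' -> rel a a'' -> rel_at_twice (once a) (twice a' a'').
Proof. intros; exists EHole, EHole, a, a', a''; repeat split; auto; now intros z z'. Qed.

Lemma rel_head_step r r1 t' :
  head_step r r1 -> rel r t' ->
  (exists r1', head_step t' r1' /\ rel r1 r1') \/ rel_at_twice r t'.
Proof.
  intros [b v Hv | F b | v Hv] Hr.
  - inversion Hr as [| | | ? t1' ? v' Hb Hv' | | |]; subst.
    inversion Hb as [| | b0 b' Hb0 | | | |]; subst.
    left; exists (open b' v'); split.
    + constructor; now apply (rel_value _ _ Hv').
    + now apply rel_open_rec.
  - inversion Hr as [| | | | | ? t'' Ht | a a' a'' Ha' Ha'']; subst.
    + destruct (rel_control_stuck _ _ _ Ht) as (F' & b' & -> & Hb & HF).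
      left; eexists; split; [constructor|].
      apply rel_reset, rel_open_rec; auto.
    + right; now apply rel_at_twice_root.
  - inversion Hr as [| | | | | ? v' Hv' | a a' a'' Ha' Ha'']; subst.
    + left; exists v'; split; auto.
      constructor; now apply (rel_value _ _ Hv').
    + right; now apply rel_at_twice_root.
Qed.

Lemma rel_head_step_inv t r' r1' :
  head_step r' r1' -> rel t r' ->
  (exists r1, head_step t r1 /\ rel r1 r1') \/ rel_at_twice t r'.
Proof.
  intros [b' v' Hv' | F b' | v' Hv'] Hr.
  - inversion Hr as [| | | t1 ? v ? Hb Hv | | |]; subst.
    inversion Hb as [| | b b0 Hb0 | | | |]; subst.
    left; exists (open b v); split.
    + constructor; now apply (rel_value _ _ Hv).
    + now apply rel_open_rec.
  - inversion Hr as [| | | | | t0 ? Ht | a a' a'' Ha' Ha'']; subst.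
    + destruct (rel_control_stuck_inv _ _ _ Ht) as (F0 & b0 & -> & Hb & HF).
      left; eexists; split; [constructor|].
      apply rel_reset, rel_open_rec; auto.
    + right; now apply rel_at_twice_root.
  - inversion Hr as [| | | | | v ? Hv | a a' a'' Ha' Ha'']; subst.
    + left; exists v; split; auto.
      constructor; now apply (rel_value _ _ Hv).
    + right; now apply rel_at_twice_root.
Qed.

Lemma rel_step t t' t1 :
  rel t t' -> step t t1 -> (exists t1', step t' t1' /\ rel t1 t1') \/ rel_at_twice t t'.
Proof.
  intros Ht Hs; apply step_iff in Hs as (E & r & r1 & -> & -> & Hr).
  revert t' Ht; induction E as [|v E IH|E IH u|E IH]; simpl; intros t' Ht.
  - destruct (rel_head_step _ _ _ Hr Ht) as [(r1' & Hr1 & Hrel)|]; [left|now right].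
    exists r1'; split; auto; apply step_iff; now exists EHole, t', r1'.
  - inversion Ht as [| | | ? w ? t2' Hv Ht2 | | |]; subst.
    destruct (value_is_val w) as [w' ->]; [apply (rel_value _ _ Hv), value_val|].
    destruct (IH _ Ht2) as [(t1' & Hs & Hrel)|Hbase].
    + left; exists (app w' t1'); split; auto.
      exact (step_plugE (EAppR w' EHole) _ _ Hs).
    + right; apply (rel_at_twice_plugE (EAppR v EHole) (EAppR w' EHole)); auto.
      intros z z' Hz; simpl; auto.
  - inversion Ht as [| | | ? t2' ? u' Ht2 Hu | | |]; subst.
    destruct (IH _ Ht2) as [(t1' & Hs & Hrel)|Hbase].
    + left; exists (app t1' u'); split; auto.
      exact (step_plugE (EAppL EHole u') _ _ Hs).
    + right; apply (rel_at_twice_plugE (EAppL EHole u) (EAppL EHole u')); auto.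
      intros z z' Hz; simpl; auto.
  - inversion Ht as [| | | | | ? t2' Ht2 | a a' a'' Ha' Ha'']; subst.
    + destruct (IH _ Ht2) as [(t1' & Hs & Hrel)|Hbase].
      * left; exists (reset t1'); split; auto.
        exact (step_plugE (EReset EHole) _ _ Hs).
      * right; apply (rel_at_twice_plugE (EReset EHole) (EReset EHole)); auto.
        intros z z' Hz; simpl; auto.
    + right; exact (rel_at_twice_root a a' a'' Ha' Ha'').
Qed.

Lemma rel_step_inv t t' t1' :
  rel t t' -> step t' t1' -> (exists t1, step t t1 /\ rel t1 t1') \/ rel_at_twice t t'.
Proof.
  intros Ht Hs; apply step_iff in Hs as (E & r & r1 & -> & -> & Hr).
  revert t Ht; induction E as [|v E IH|E IH u|E IH]; simpl; intros t Ht.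
  - destruct (rel_head_step_inv _ _ _ Hr Ht) as [(r0 & Hr0 & Hrel)|]; [left|now right].
    exists r0; split; auto; apply step_iff; now exists EHole, t, r0.
  - inversion Ht as [| | | w ? t2 ? Hv Ht2 | | |]; subst.
    destruct (value_is_val w) as [w' ->]; [apply (rel_value _ _ Hv), value_val|].
    destruct (IH _ Ht2) as [(t1 & Hs & Hrel)|Hbase].
    + left; exists (app w' t1); split; auto.
      exact (step_plugE (EAppR w' EHole) _ _ Hs).
    + right; apply (rel_at_twice_plugE (EAppR w' EHole) (EAppR v EHole)); auto.
      intros z z' Hz; simpl; auto.
  - inversion Ht as [| | | t2 ? u0 ? Ht2 Hu | | |]; subst.
    destruct (IH _ Ht2) as [(t1 & Hs & Hrel)|Hbase].
    + left; exists (app t1 u0); split; auto.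
      exact (step_plugE (EAppL EHole u0) _ _ Hs).
    + right; apply (rel_at_twice_plugE (EAppL EHole u0) (EAppL EHole u)); auto.
      intros z z' Hz; simpl; auto.
  - inversion Ht as [| | | | | t2 ? Ht2 | a a' a'' Ha' Ha'']; subst.
    + destruct (IH _ Ht2) as [(t1 & Hs & Hrel)|Hbase].
      * left; exists (reset t1); split; auto.
        exact (step_plugE (EReset EHole) _ _ Hs).
      * right; apply (rel_at_twice_plugE (EReset EHole) (EReset EHole)); auto.
        intros z z' Hz; simpl; auto.
    + right; exact (rel_at_twice_root a a' a'' Ha' Ha'').
Qed.

Lemma nsteps_once n E a r :
  nsteps n (plugE E (once a)) r -> observable r ->
  exists m1 m2 w, m1 < n /\ m2 < n /\ nsteps m1 (wrap a) w /\ value w /\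
                  nsteps m2 (plugE E (reset id_lam)) r.
Proof.
  intros Hn Hr.
  replace (plugE E (once a))
    with (plugE (ecomp E (EReset (EAppL EHole (shift id_lam)))) (wrap a)) in Hn
    by apply plugE_ecomp.
  destruct (nsteps_plugE_reset _ _ _ _ Hn Hr) as (m1 & m2 & w & -> & H1 & Hw & H2).
  destruct (value_is_val _ Hw) as [v ->]; rewrite plugE_ecomp in H2.
  destruct (nsteps_plugE_capture _ _ (FAppR v FHole) _ _ H2 Hr) as (m3 & -> & H3).
  exists m1, m3, v; repeat split; auto; lia.
Qed.

Lemma nsteps_twice n E a' a'' r :
  nsteps n (plugE E (twice a' a'')) r -> observable r ->
  exists m1 m2 w', m1 < n /\ m2 < n /\ nsteps m1 (wrap a') w' /\ value w' /\
                   nsteps m2 (plugE E (reset id_lam)) r.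
Proof.
  intros Hn Hr.
  replace (plugE E (twice a' a''))
    with (plugE (ecomp E (EReset (EAppL EHole (app (wrap a'') (shift id_lam))))) (wrap a'))
    in Hn by apply plugE_ecomp.
  destruct (nsteps_plugE_reset _ _ _ _ Hn Hr) as (m1 & m2 & w' & -> & H1 & Hw' & H2).
  destruct (value_is_val _ Hw') as [v' ->].
  replace (plugE (ecomp E _) v')
    with (plugE (ecomp E (EReset (EAppR v' (EAppL EHole (shift id_lam))))) (wrap a''))
    in H2 by (rewrite !plugE_ecomp; reflexivity).
  destruct (nsteps_plugE_reset _ _ _ _ H2 Hr) as (m3 & m4 & w'' & -> & _ & Hw'' & H4).
  destruct (value_is_val _ Hw'') as [v'' ->]; rewrite plugE_ecomp in H4.
  destruct (nsteps_plugE_capture _ _ (FAppR v' (FAppR v'' FHole)) _ _ H4 Hr)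
    as (m5 & -> & H5).
  exists m1, m5, v'; repeat split; auto; lia.
Qed.

Lemma steps_once E a w :
  steps (wrap a) w -> value w -> steps (plugE E (once a)) (plugE E (reset id_lam)).
Proof.
  intros Hs Hw; apply steps_plugE; destruct (value_is_val _ Hw) as [v ->].
  apply rt_trans with (reset (app v (shift id_lam))).
  - exact (steps_plugE (EReset (EAppL EHole (shift id_lam))) _ _ Hs).
  - apply rt_step; exact (step_shift EHole (FAppR v FHole) id_lam).
Qed.

Lemma steps_twice E a' a'' w' w'' :
  steps (wrap a') w' -> value w' -> steps (wrap a'') w'' -> value w'' ->
  steps (plugE E (twice a' a'')) (plugE E (reset id_lam)).
Proof.
  intros Hs' Hw' Hs'' Hw''; apply steps_plugE.
  destruct (value_is_val _ Hw') as [v' ->], (value_is_val _ Hw'') as [v'' ->].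
  apply rt_trans with (reset (app v' (app (wrap a'') (shift id_lam)))).
  { exact (steps_plugE (EReset (EAppL EHole (app (wrap a'') (shift id_lam)))) _ _ Hs'). }
  apply rt_trans with (reset (app v' (app v'' (shift id_lam)))).
  { exact (steps_plugE (EReset (EAppR v' (EAppL EHole (shift id_lam)))) _ _ Hs''). }
  apply rt_step; exact (step_shift EHole (FAppR v' (FAppR v'' FHole)) id_lam).
Qed.

Lemma rel_wrap a a' : rel a a' -> rel (wrap a) (wrap a').
Proof. intros; apply rel_reset, rel_app; auto using rel_refl. Qed.

Lemma value_observable t : value t -> observable t.
Proof. left; now apply is_value_iff. Qed.

Lemma rel_nsteps n t t' r :
  rel t t' -> nsteps n t r -> observable r -> exists r', steps t' r' /\ rel r r'.
Proof.
  revert t t' r; induction n as [n IH] using lt_wf_ind; intros t t' r Ht Hn Hr.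
  inversion Hn as [|m ? t1 ? Hs Hrest]; subst.
  - exists t'; split; auto using rt_refl.
  - destruct (rel_step _ _ _ Ht Hs)
      as [(t1' & Hs' & Ht1)|(E & E' & a & a' & a'' & -> & -> & Ha' & Ha'' & HE)].
    + destruct (IH m (Nat.lt_succ_diag_r m) _ _ _ Ht1 Hrest Hr) as (r' & Hr' & Hrel).
      exists r'; split; auto; eapply rt_trans; eauto using rt_step.
    + destruct (nsteps_once _ _ _ _ Hn Hr) as (m1 & m2 & w & Hm1 & Hm2 & Hw1 & Hw & H2).
      destruct (IH m1 Hm1 _ _ _ (rel_wrap _ _ Ha') Hw1 (value_observable _ Hw))
        as (w' & Hw1' & Hrel').
      destruct (IH m1 Hm1 _ _ _ (rel_wrap _ _ Ha'') Hw1 (value_observable _ Hw))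
        as (w'' & Hw1'' & Hrel'').
      destruct (IH m2 Hm2 _ _ _ (HE _ _ (rel_refl _)) H2 Hr) as (r' & Hr' & Hrel).
      exists r'; split; auto.
      apply rt_trans with (plugE E' (reset id_lam)); auto.
      apply (steps_twice _ _ _ w' w''); auto.
      * now apply (rel_value _ _ Hrel').
      * now apply (rel_value _ _ Hrel'').
Qed.

Lemma rel_nsteps_inv n t t' r' :
  rel t t' -> nsteps n t' r' -> observable r' -> exists r, steps t r /\ rel r r'.
Proof.
  revert t t' r'; induction n as [n IH] using lt_wf_ind; intros t t' r' Ht Hn Hr.
  inversion Hn as [|m ? t1' ? Hs Hrest]; subst.
  - exists t; split; auto using rt_refl.
  - destruct (rel_step_inv _ _ _ Ht Hs)
      as [(t1 & Hs1 & Ht1)|(E & E' & a & a' & a'' & -> & -> & Ha' & Ha'' & HE)].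
    + destruct (IH m (Nat.lt_succ_diag_r m) _ _ _ Ht1 Hrest Hr) as (r & Hr1 & Hrel).
      exists r; split; auto; eapply rt_trans; eauto using rt_step.
    + destruct (nsteps_twice _ _ _ _ _ Hn Hr) as (m1 & m2 & w' & Hm1 & Hm2 & Hw1 & Hw & H2).
      destruct (IH m1 Hm1 _ _ _ (rel_wrap _ _ Ha') Hw1 (value_observable _ Hw))
        as (w & Hw1' & Hrelw).
      destruct (IH m2 Hm2 _ _ _ (HE _ _ (rel_refl _)) H2 Hr) as (r & Hr1 & Hrel).
      exists r; split; auto.
      apply rt_trans with (plugE E (reset id_lam)); auto.
      apply (steps_once _ _ w); auto; now apply (rel_value _ _ Hrelw).
Qed.

Lemma rel_eval t t' r :
  rel t t' -> eval t r -> observable r -> exists r', eval t' r' /\ rel r r'.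
Proof.
  intros Ht [Hs _] Hr; destruct (steps_nsteps _ _ Hs) as [n Hn].
  destruct (rel_nsteps _ _ _ _ Ht Hn Hr) as (r' & Hs' & Hrel).
  exists r'; repeat split; auto.
  apply observable_irreducible; destruct (rel_observable _ _ Hrel) as [[] []].
  destruct Hr; [left|right]; auto.
Qed.

Lemma rel_eval_inv t t' r' :
  rel t t' -> eval t' r' -> observable r' -> exists r, eval t r /\ rel r r'.
Proof.
  intros Ht [Hs _] Hr; destruct (steps_nsteps _ _ Hs) as [n Hn].
  destruct (rel_nsteps_inv _ _ _ _ Ht Hn Hr) as (r & Hs1 & Hrel).
  exists r; repeat split; auto.
  apply observable_irreducible; destruct (rel_observable _ _ Hrel) as [[] []].
  destruct Hr; [left|right]; auto.
Qed.

Lemma rel_same_outcomes t t' :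
  rel t t' ->
  (evals_to_value t <-> evals_to_value t') /\
  (evals_to_control_stuck t <-> evals_to_control_stuck t').
Proof.
  intros Ht; split; split.
  - intros (r & Hr & Hv).
    destruct (rel_eval _ _ _ Ht Hr (or_introl Hv)) as (r' & ? & Hrel).
    exists r'; split; auto; now apply (rel_observable _ _ Hrel).
  - intros (r' & Hr & Hv).
    destruct (rel_eval_inv _ _ _ Ht Hr (or_introl Hv)) as (r & ? & Hrel).
    exists r; split; auto; now apply (rel_observable _ _ Hrel).
  - intros (r & Hr & Hc).
    destruct (rel_eval _ _ _ Ht Hr (or_intror Hc)) as (r' & ? & Hrel).
    exists r'; split; auto; now apply (rel_observable _ _ Hrel).
  - intros (r' & Hr & Hc).
    destruct (rel_eval_inv _ _ _ Ht Hr (or_intror Hc)) as (r & ? & Hrel).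
    exists r; split; auto; now apply (rel_observable _ _ Hrel).
Qed.

Lemma plugE_open_stuck_inj E x (v : val) E' x' (v' : val) :
  plugE E (app (fvar x) v) = plugE E' (app (fvar x') v') -> E = E' /\ x = x'.
Proof.
  assert (Happ : forall E0 y (w : val), ~ value (plugE E0 (app (fvar y) w)))
    by (intros E0 y w H; now apply plugE_value in H as [_ []]).
  revert E'; induction E as [|u E IH|E IH u|E IH]; intros [|u' E'|E' u0|E'] Heq;
    simpl in Heq; try discriminate; try (injection Heq as H1 H2).
  - now split.
  - exfalso; apply (Happ E' x' v'); rewrite <- H2; apply value_val.
  - exfalso; apply (Happ E' x' v'); rewrite <- H1; exact I.
  - exfalso; apply (Happ E x v); rewrite H2; apply value_val.
  - apply val_term_inj in H1 as ->; now destruct (IH _ H2) as [-> ->].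
  - exfalso; apply (Happ E' x' v'); rewrite <- H1; apply value_val.
  - exfalso; apply (Happ E x v); rewrite H1; exact I.
  - exfalso; apply (Happ E x v); rewrite H1; apply value_val.
  - subst u0; now destruct (IH _ H1) as [-> ->].
  - injection Heq as Heq; now destruct (IH _ Heq) as [-> ->].
Qed.

Lemma nf_rel_open_stuck R E x (v : val) t' :
  nf_rel R (plugE E (app (fvar x) v)) t' ->
  exists E' (v' : val), t' = plugE E' (app (fvar x) v') /\ ectx_rel R E E'.
Proof.
  intros [(v0 & v1 & Heq & _)|[(F0 & F1 & b0 & b1 & Heq & _)|Hos]].
  - destruct (plugE_value E (app (fvar x) v)) as [_ []].
    rewrite Heq; apply value_val.
  - symmetry in Heq; apply control_stuck_plugE in Heq as [[]|Hcs].
    now apply app_fvar_not_control_stuck in Hcs.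
  - destruct Hos as (E0 & E1 & y & v0 & v1 & Heq & -> & HE & _).
    apply plugE_open_stuck_inj in Heq as [-> ->]; eauto.
Qed.

Lemma ectx_rel_reset_inv R u0 u1 :
  ectx_rel R (EReset (EAppL (EReset EHole) u0)) (EReset (EAppL (EReset EHole) u1)) ->
  forall z, ~ In z (fv u0) -> ~ In z (fv u1) ->
  R (reset (app (fvar z) u0)) (reset (app (fvar z) u1)).
Proof.
  assert (Hsplit : forall E F u,
             ecomp E (EReset (f2e F)) = EReset (EAppL (EReset EHole) u) ->
             E = EReset (EAppL EHole u) /\ F = FHole).
  { intros [| | |[| |[| | |[]]|]] [|? []|[]] u; simpl; try discriminate.
    intros [= ->]; auto. }
  intros [(E0 & E1 & F0 & F1 & H0 & H1 & HR)|(F0 & F1 & H0 & _)] z Hz0 Hz1.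
  - apply eq_sym, Hsplit in H0 as [-> ->]; apply eq_sym, Hsplit in H1 as [-> ->].
    exact (proj1 (HR z Hz0 Hz1)).
  - destruct F0; discriminate.
Qed.

Lemma once_twice_not_nf_bisimilar x :
  ~ nf_bisimilar (once (fvar x)) (twice (fvar x) (fvar x)).
Proof.
  intros (R & [Hsim _] & HR).
  pose (E0 := EReset (EAppL (EReset EHole) (shift id_lam))).
  pose (E1 := EReset (EAppL (EReset EHole) (app (wrap (fvar x)) (shift id_lam)))).
  assert (Hirr : forall E, irreducible (plugE E (app (fvar x) id_lam)))
    by (intros E; apply open_stuck_irreducible; now exists E, x, (VLam (bvar 0))).
  destruct (Hsim (once (fvar x)) _ _ HR (conj (rt_refl _ _ _) (Hirr E0)))
    as (t1 & [Hs _] & Hnf).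
  apply (irreducible_steps _ _ (Hirr E1)) in Hs as ->.
  apply (nf_rel_open_stuck R E0 x (VLam (bvar 0))) in Hnf as (E' & v' & Heq & HE).
  apply (plugE_open_stuck_inj E1 x (VLam (bvar 0))) in Heq as [<- _].
  (* [S x] is fresh: [x] is the only free variable of the two contexts. *)
  set (z := S x).
  assert (Hz : R (reset (app (fvar z) (shift id_lam)))
                 (reset (app (fvar z) (app (wrap (fvar x)) (shift id_lam))))).
  { apply (ectx_rel_reset_inv R _ _ HE); simpl; [tauto|intros [H|[]]; lia]. }
  assert (Heval : eval (reset (app (fvar z) (shift id_lam))) id_lam).
  { split; [|now apply value_irreducible].
    apply rt_trans with (reset id_lam); apply rt_step.
    - exact (step_shift EHole (FAppR (VVar z) FHole) id_lam).
    - exact (step_reset EHole (VLam (bvar 0))). }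
  destruct (Hsim _ _ _ Hz Heval) as (u & [Hu _] & Hnf).
  pose (Ez := EReset (EAppR (VVar z) (EAppL (EReset EHole) (shift id_lam)))).
  apply (irreducible_steps _ _ (Hirr Ez)) in Hu as ->.
  destruct Hnf
    as [(v0 & v1 & _ & Hv1 & _)|[(F0 & ? & ? & ? & HF0 & _)|(E & ? & ? & ? & ? & HE0 & _)]].
  - destruct v1; discriminate.
  - destruct F0; discriminate.
  - destruct E; discriminate.
Qed.

Theorem proposition1 (x k y : atom) (Hxk : x <> k) :
  let i := nlam y (fvar y) in
  let t0 := reset (app (reset (app (fvar x) i)) (nshift k i)) in
  let t1 := reset (app (reset (app (fvar x) i))
                       (app (reset (app (fvar x) i)) (nshift k i))) in
  ctx_equiv t0 t1 /\ ~ nf_bisimilar t0 t1.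
Proof.
  intros i t0 t1.
  assert (Hi : i = id_lam) by (unfold i, nlam, close; simpl; now rewrite Nat.eqb_refl).
  assert (Ht0 : t0 = once (fvar x)) by (unfold t0; now rewrite Hi).
  assert (Ht1 : t1 = twice (fvar x) (fvar x)) by (unfold t1; now rewrite Hi).
  rewrite Ht0, Ht1; split.
  - intros C _ _ _; apply rel_same_outcomes, rel_fill, rel_once_twice; apply rel_refl.
  - apply once_twice_not_nf_bisimilar.
Qed.
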